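(* Let $E$ be a symmetric operator defined on a dense domain $\mathcal D$ of a Hilbert space $\mathcal H$. Let $\mathbf d=\{d_i\}_{i\in\mathbb N}$ and $\boldsymbol\lambda=\{\lambda_i\}_{i\in\mathbb N}$ be two nondecreasing real sequences such that \[ \delta_k:=\sum_{i=1}^k(d_i-\lambda_i)\ge0\qquad\text{for all }k\in\mathbb N, \] and suppose $\delta_k=0$ for infinitely many $k\in\mathbb N$. Let $\{f_i\}_{i\in\mathbb N}\subset\mathcal D$ be an orthonormal sequence with $\langle Ef_i,f_i\rangle=\lambda_i$ for all $i$. Then there exists an orthonormal sequence $\{e_i\}_{i\in\mathbb N}$, each element of which lies in the (algebraic) linear span of $\{f_i\}_{i\in\mathbb N}$, such that $\overline{\operatorname{span}}\{e_i\}=\overline{\operatorname{span}}\{f_i\}$ and $\langle Ee_i,e_i\rangle=d_i$ for all $i\in\mathbb N$.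
   Context: $E$ symmetric means $\langle Ef,g\rangle=\langle f,Eg\rangle$ for all $f,g\in\mathcal D$. $\overline{\operatorname{span}}$ is the closed linear span. *)

From mathcomp Require Import all_boot all_order all_algebra.
From mathcomp Require Export complex.
From mathcomp Require Export reals.
Import GRing.Theory Num.Theory.

Set Implicit Arguments.
Unset Strict Implicit.
Unset Printing Implicit Defensive.

Local Open Scope ring_scope.
Local Open Scope complex_scope.

Section Hilbert.
Variables (R : realType) (H : lmodType R[i]) (ip : H -> H -> R[i]).

Definition is_inner_product : Prop :=
  [/\ (forall (a : R[i]) (x y z : H), ip (a *: x + y) z = a * ip x z + ip y z),
      (forall x y : H, ip y x = (ip x y)^*),
      (forall x : H, 0 <= ip x x) &
      (forall x : H, ip x x = 0 -> x = 0)].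

Definition dist_lt (x y : H) (eps : R) : Prop := ip (x - y) (x - y) < (eps ^+ 2)%:C.

Definition complete_ip : Prop :=
  forall u : nat -> H,
    (forall eps : R, 0 < eps -> exists N, forall m n, (N <= m)%N -> (N <= n)%N ->
        dist_lt (u m) (u n) eps) ->
    exists x : H, forall eps : R, 0 < eps -> exists N, forall n, (N <= n)%N ->
        dist_lt (u n) x eps.

Definition is_hilbert : Prop := is_inner_product /\ complete_ip.

Definition in_span (f : nat -> H) (v : H) : Prop :=
  exists (n : nat) (c : nat -> R[i]), v = \sum_(i < n) c i *: f i.

Definition in_closed_span (f : nat -> H) (v : H) : Prop :=
  forall eps : R, 0 < eps -> exists w, in_span f w /\ dist_lt v w eps.

Definition ip_orthonormal (f : nat -> H) : Prop :=
  forall i j : nat, ip (f i) (f j) = (i == j)%:R.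

Definition is_subspace (D : H -> Prop) : Prop :=
  D 0 /\ forall (a : R[i]) (x y : H), D x -> D y -> D (a *: x + y).

Definition dense (D : H -> Prop) : Prop :=
  forall (x : H) (eps : R), 0 < eps -> exists y, D y /\ dist_lt x y eps.

(* E : D -> H linear operator (values outside D are irrelevant) *)
Definition linear_on (D : H -> Prop) (E : H -> H) : Prop :=
  forall (a : R[i]) (x y : H), D x -> D y -> E (a *: x + y) = a *: E x + E y.

Definition densely_defined_symmetric (D : H -> Prop) (E : H -> H) : Prop :=
  [/\ is_subspace D, dense D, linear_on D E &
      forall f g : H, D f -> D g -> ip (E f) g = ip f (E g)].

End Hilbert.

(* Write q x = Re <E x, x> and, for an orthonormal family g, let the defect at n be
   sum_(i < n) (d i - q (g i)).  Starting from g = f we make q (g k) = d k for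
   k = 0, 1, ... while keeping every defect nonnegative.  If the defect at k vanishes and
   q (g k) < d k, let m > k be the first index with q (g m) >= d k; it lies before every
   later zero of the defect.  A rotation in the plane of g k and g m preserves
   q (g k) + q (g m), and solving a quadratic on the unit circle makes q (g k) = d k.  The
   defect is then unchanged outside (k, m] and stays nonnegative inside, since
   q (g i) < d k <= d i for k < i < m.  Rotations never mix indices across a zero z of the
   defect, so the first z vectors of g and of f span the same space; and g i is frozen
   from stage i + 1 on, so the frozen vectors form the required sequence e. *)

From mathcomp Require Import all_boot all_order all_algebra.
From mathcomp Require Import boolp ring lra.
Import Order.TTheory GRing.Theory Num.Theory.
Set Implicit Arguments.
Unset Strict Implicit.
Unset Printing Implicit Defensive.
Local Open Scope ring_scope.
Local Open Scope complex_scope.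

Section PrefixSpan.
Variables (K : pzRingType) (V : lmodType K).
Implicit Types (g h : nat -> V) (v x y : V).

Definition in_span_lt g (n : nat) v : Prop :=
  exists c : nat -> K, v = \sum_(i < n) c i *: g i.

Lemma span_lt0 g n : in_span_lt g n 0.
Proof. by exists (fun=> 0); rewrite big1 // => i _; rewrite scale0r. Qed.

Lemma span_ltZD g n a x y :
  in_span_lt g n x -> in_span_lt g n y -> in_span_lt g n (a *: x + y).
Proof.
case=> c -> [c' ->]; exists (fun i => a * c i + c' i).
rewrite scaler_sumr -big_split; apply: eq_bigr => i _.
by rewrite scalerDl scalerA.
Qed.

Lemma span_ltZ g n a x : in_span_lt g n x -> in_span_lt g n (a *: x).
Proof. by move=> hx; rewrite -[_ *: x]addr0; apply: span_ltZD (span_lt0 _ _). Qed.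

Lemma span_lt_gen g n i : (i < n)%N -> in_span_lt g n (g i).
Proof.
move=> lt_in; exists (fun j => (j == i)%:R).
rewrite (bigD1 (Ordinal lt_in)) //= eqxx scale1r big1 ?addr0 // => j.
by rewrite -val_eqE /= => /negbTE ->; rewrite scale0r.
Qed.

Lemma span_lt_trans g h n m v :
  (forall i, (i < n)%N -> in_span_lt h m (g i)) ->
  in_span_lt g n v -> in_span_lt h m v.
Proof.
move=> hg [c ->]; elim: n hg => [|n IH] hg; first by rewrite big_ord0; apply: span_lt0.
rewrite big_ord_recr /= -[_ *: g n]scale1r addrC; apply: span_ltZD.
  by apply: span_ltZ; apply: hg.
by apply: IH => i lt_in; apply: hg; apply: ltnW.
Qed.

Lemma span_lt_mono g n m v :
  (n <= m)%N -> in_span_lt g n v -> in_span_lt g m v.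
Proof.
by move=> le_nm; apply: span_lt_trans => i lt_in; apply: span_lt_gen (leq_trans _ le_nm).
Qed.

End PrefixSpan.

Lemma in_span_trans (R : realType) (H : lmodType R[i]) (g h : nat -> H) (v : H) :
  (forall i, in_span h (g i)) -> in_span g v -> in_span h v.
Proof.
move=> hg [n hv].
suff [M hM] : exists M, forall i, (i < n)%N -> in_span_lt h M (g i).
  by exists M; apply: span_lt_trans hM hv.
elim: n {hv} => [|n [M hM]]; first by exists 0%N.
have [m hm] := hg n; exists (maxn M m) => i; rewrite ltnS leq_eqVlt.
case/predU1P => [->|/hM hi].
  by apply: span_lt_mono hm; rewrite leq_maxr.
by apply: span_lt_mono hi; rewrite leq_maxl.
Qed.

Lemma in_closed_span_mono (R : realType) (H : lmodType R[i]) (ip : H -> H -> R[i])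
    (g h : nat -> H) (v : H) :
  (forall i, in_span h (g i)) -> in_closed_span ip g v -> in_closed_span ip h v.
Proof.
move=> hg gv eps eps_gt0; have [w [gw vw]] := gv eps eps_gt0.
by exists w; split=> //; apply: in_span_trans hg gw.
Qed.

Lemma dependent_choice (T : Type) (P : nat -> T -> Prop)
    (step_rel : nat -> T -> T -> Prop) (x0 : T) :
  P 0%N x0 -> (forall k x, P k x -> exists2 y, P k.+1 y & step_rel k x y) ->
  exists u : nat -> T, forall k, P k (u k) /\ step_rel k (u k) (u k.+1).
Proof.
move=> P0 step.
have next k (x : {x | P k x}) : {y | P k.+1 y /\ step_rel k (sval x) y}.
  apply: cid.
  by case: x => x Px /=; have [y] := step k x Px; exists y.
pose fix u k : {x | P k x} :=
  match k with 0%N => exist _ x0 P0 | k'.+1 => exist _ _ (proj1 (svalP (next k' (u k')))) end.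
exists (fun k => sval (u k)) => k; split; first exact: svalP.
exact: proj2 (svalP (next k (u k))).
Qed.

Section Defect.
Variable R : realDomainType.
Implicit Types (d mu : nat -> R).

Definition defect d mu (n : nat) : R := \sum_(i < n) (d i - mu i).

Lemma defect_split d mu k n : (k <= n)%N ->
  defect d mu n = defect d mu k + \sum_(k <= i < n) (d i - mu i).
Proof.
move=> le_kn; rewrite /defect -!(big_mkord xpredT (fun i => d i - mu i)).
by rewrite (big_cat_nat (leq0n k) le_kn).
Qed.

Lemma defectS d mu n : defect d mu n.+1 = defect d mu n + (d n - mu n).
Proof. by rewrite /defect big_ord_recr. Qed.

Lemma defect_zero_witness d mu k z :
  {homo d : i j / (i <= j)%N >-> i <= j} -> (k < z)%N ->
  defect d mu k = 0 -> defect d mu z = 0 ->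
  exists2 i, (k <= i < z)%N & d k <= mu i.
Proof.
move=> d_nd lt_kz dk0 dz0.
have : [exists i : 'I_z, (k <= i)%N && (d k <= mu i)].
  apply: contraT => /existsPn none.
  have term_gt0 i : (k <= i < z)%N -> 0 < d i - mu i.
    case/andP=> le_ki lt_iz; have := none (Ordinal lt_iz).
    by rewrite /= le_ki -ltNge subr_gt0 => /lt_le_trans; apply; apply: d_nd.
  have : 0 < \sum_(k <= i < z) (d i - mu i).
    rewrite big_ltn // ltr_pwDl ?term_gt0 ?leqnn //.
    rewrite big_nat_cond sumr_ge0 // => i /andP [/andP [lt_ki lt_iz] _].
    by rewrite ltW // term_gt0 // (ltnW lt_ki).
  by move: dz0; rewrite (defect_split _ _ (ltnW lt_kz)) dk0 add0r => ->; rewrite ltxx.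
by case/existsP => -[i lt_iz] /andP [le_ki hi]; exists i; rewrite ?le_ki.
Qed.

Lemma defect_partner d mu k z :
  {homo d : i j / (i <= j)%N >-> i <= j} -> (k < z)%N ->
  defect d mu k = 0 -> defect d mu z = 0 -> mu k < d k ->
  exists m, [/\ (k < m)%N, d k <= mu m, (forall i, (k < i < m)%N -> mu i < d k) &
    forall z', (k < z')%N -> defect d mu z' = 0 -> (m < z')%N].
Proof.
move=> d_nd lt_kz dk0 dz0 lt_k.
have witness z' : (k < z')%N -> defect d mu z' = 0 ->
    exists2 i, (k < i < z')%N & d k <= mu i.
  move=> lt_kz' dz'0; have [i /andP [le_ki lt_iz'] hi] := defect_zero_witness d_nd lt_kz' dk0 dz'0.
  exists i => //; rewrite lt_iz' andbT ltn_neqAle le_ki andbT.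
  by apply: contraTneq hi => <-; rewrite -ltNge.
have exP : exists j, (k < j)%N && (d k <= mu j).
  by have [i /andP [lt_ki _] hi] := witness z lt_kz dz0; exists i; rewrite lt_ki.
case: (ex_minnP exP) => m /andP [lt_km hm] m_min; exists m; split => //.
  move=> i /andP [lt_ki lt_im]; rewrite ltNge; apply: contraTN lt_im => hi.
  by rewrite -leqNgt m_min // lt_ki.
move=> z' lt_kz' dz'0; have [i /andP [lt_ki lt_iz'] hi] := witness z' lt_kz' dz'0.
by apply: leq_ltn_trans lt_iz'; apply: m_min; rewrite lt_ki.
Qed.

Section Transfer.
Variables (d mu nu : nat -> R) (k m : nat).
Hypotheses (lt_km : (k < m)%N) (nu_out : forall i, i != k -> i != m -> nu i = mu i)
  (nu_sum : nu k + nu m = mu k + mu m).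

Lemma defect_transfer_out n : (n <= k)%N || (m < n)%N -> defect d nu n = defect d mu n.
Proof.
case/orP => [le_nk|lt_mn].
  apply: eq_bigr => i _; have lt_ik := leq_trans (ltn_ord i) le_nk.
  by rewrite nu_out ?ltn_eqF // (ltn_trans lt_ik lt_km).
have lt_kn := ltn_trans lt_km lt_mn.
have mk : Ordinal lt_mn != Ordinal lt_kn by rewrite -val_eqE /= gtn_eqF.
rewrite /defect (bigD1 (Ordinal lt_kn)) // [in X in _ = X](bigD1 (Ordinal lt_kn)) //=.
rewrite (bigD1 (Ordinal lt_mn)) // [in X in _ = X](bigD1 (Ordinal lt_mn)) //=.
rewrite (eq_bigr (fun i : 'I_n => d i - mu i)) => [|i /andP [ik im]].
  by rewrite !addrA; congr (_ + _); move: nu_sum; lra.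
by move: ik im; rewrite -!val_eqE /= => ik im; rewrite nu_out.
Qed.

Lemma defect_transfer_ge0 :
  {homo d : i j / (i <= j)%N >-> i <= j} -> (forall n, 0 <= defect d mu n) ->
  defect d mu k = 0 -> nu k = d k -> (forall i, (k < i < m)%N -> mu i < d k) ->
  forall n, 0 <= defect d nu n.
Proof.
move=> d_nd mu_ge0 dk0 nu_k below n.
have [le_nk|lt_kn] := leqP n k; first by rewrite defect_transfer_out ?le_nk.
have [le_nm|lt_mn] := leqP n m; last by rewrite defect_transfer_out ?lt_mn ?orbT.
rewrite (defect_split _ _ lt_kn) defectS defect_transfer_out ?leqnn // dk0 nu_k subrr.
rewrite !add0r big_nat_cond sumr_ge0 // => i /andP [/andP [lt_ki lt_in] _].
have lt_im := leq_trans lt_in le_nm.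
have -> : nu i = mu i by apply: nu_out; [rewrite gtn_eqF | rewrite ltn_eqF].
rewrite subr_ge0 ltW //.
by apply: lt_le_trans (below i _) (d_nd _ _ (ltnW lt_ki)); rewrite lt_ki.
Qed.

End Transfer.
End Defect.

Lemma unit_circle_form_attains (R : rcfType) (a b r t : R) : a < t <= b ->
  exists c s : R, c ^+ 2 + s ^+ 2 = 1 /\ c ^+ 2 * a + 2 * c * s * r + s ^+ 2 * b = t.
Proof.
case/andP=> lt_at le_tb.
have al_neq0 : t - a != 0 by rewrite subr_eq0 gt_eqF.
have disc_ge0 : 0 <= r ^+ 2 + (t - a) * (b - t).
  by rewrite addr_ge0 ?sqr_ge0 // mulr_ge0 // subr_ge0 // ltW.
set q := Num.sqrt (r ^+ 2 + (t - a) * (b - t)).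
(* [c0] is a root of [(t - a) X^2 - 2 r X - (b - t)]; the solution is [(c0, 1)] normalized. *)
pose c0 := (r + q) / (t - a).
have root_c0 : (t - a) * c0 ^+ 2 - 2 * r * c0 - (b - t) = 0.
  have -> : (t - a) * c0 ^+ 2 - 2 * r * c0 - (b - t) =
      (q ^+ 2 - (r ^+ 2 + (t - a) * (b - t))) / (t - a) by rewrite /c0; field.
  by rewrite sqr_sqrtr // subrr mul0r.
have form_c0 : c0 ^+ 2 * a + 2 * c0 * r + b = t * (1 + c0 ^+ 2).
  by rewrite -[LHS]addr0 -root_c0; ring.
have n2_gt0 : 0 < 1 + c0 ^+ 2 by rewrite ltr_pwDl ?sqr_ge0.
pose s := (Num.sqrt (1 + c0 ^+ 2))^-1.
have s2 : s ^+ 2 = (1 + c0 ^+ 2)^-1 by rewrite exprVn sqr_sqrtr // ltW.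
exists (c0 * s), s; split.
  by rewrite exprMn -[s ^+ 2 in X in _ + X]mul1r -mulrDl addrC s2 mulfV // gt_eqF.
have -> : (c0 * s) ^+ 2 * a + 2 * (c0 * s) * s * r + s ^+ 2 * b =
    s ^+ 2 * (c0 ^+ 2 * a + 2 * c0 * r + b) by ring.
by rewrite form_c0 s2 mulrCA mulVf ?mulr1 // gt_eqF.
Qed.

Section Givens.
Variables (R : realType) (H : lmodType R[i]) (G : nat -> H) (k m : nat) (c s : R).

Definition givens (i : nat) : H :=
  if i == k then c%:C *: G k + s%:C *: G m
  else if i == m then (- s)%:C *: G k + c%:C *: G m else G i.

Lemma givens_k : givens k = c%:C *: G k + s%:C *: G m.
Proof. by rewrite /givens eqxx. Qed.

Lemma givens_out i : i != k -> i != m -> givens i = G i.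
Proof. by rewrite /givens => /negbTE -> /negbTE ->. Qed.

Lemma givens_in_span i : in_span G (givens i).
Proof.
exists (maxn i (maxn k m)).+1.
have gen j : (j <= maxn i (maxn k m))%N -> in_span_lt G (maxn i (maxn k m)).+1 (G j).
  by move=> le_j; apply: span_lt_gen.
rewrite /givens; case: ifP => _; [|case: ifP => _]; last by apply: gen; rewrite leq_maxl.
all: by apply: span_ltZD; last apply: span_ltZ; apply: gen; rewrite !leq_max leqnn ?orbT.
Qed.

Hypothesis neq_km : k != m.

Lemma givens_m : givens m = (- s)%:C *: G k + c%:C *: G m.
Proof. by rewrite /givens eqxx eq_sym (negbTE neq_km). Qed.

Hypothesis cs1 : c ^+ 2 + s ^+ 2 = 1.

Lemma givens_combination (p q : R) : p%:C *: givens k + q%:C *: givens m =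
  (p * c - q * s)%:C *: G k + (p * s + q * c)%:C *: G m.
Proof.
rewrite givens_k givens_m !scalerDr !scalerA addrACA -!scalerDl -!rmorphM -!rmorphD /=.
by rewrite mulrN.
Qed.

Lemma span_lt_givens n i : (k < n)%N -> (m < n)%N -> (i < n)%N -> in_span_lt givens n (G i).
Proof.
move=> lt_kn lt_mn lt_in.
have span_pair p q : in_span_lt givens n (p%:C *: givens k + q%:C *: givens m).
  by apply: span_ltZD; last apply: span_ltZ; apply: span_lt_gen.
have [->|neq_ik] := eqVneq i k.
  have -> : G k = c%:C *: givens k + (- s)%:C *: givens m.
    have e1 : c * c - - s * s = 1 by rewrite -cs1; ring.
    have e0 : c * s + - s * c = 0 by ring.
    by rewrite givens_combination e1 e0 scale1r scale0r addr0.
  exact: span_pair.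
have [->|neq_im] := eqVneq i m.
  have -> : G m = s%:C *: givens k + c%:C *: givens m.
    have e0 : s * c - c * s = 0 by ring.
    have e1 : s * s + c * c = 1 by rewrite -cs1; ring.
    by rewrite givens_combination e1 e0 scale1r scale0r add0r.
  exact: span_pair.
by rewrite -givens_out //; apply: span_lt_gen.
Qed.

End Givens.

Section InnerProduct.
Variables (R : realType) (H : lmodType R[i]) (ip : H -> H -> R[i]).
Hypothesis ip_inner : is_inner_product ip.

Lemma ipJ x y : ip y x = (ip x y)^*.
Proof. by case: ip_inner. Qed.

Lemma ipZl a x z : ip (a *: x) z = a * ip x z.
Proof.
case: ip_inner => ipZD _ _ _.
have ip0l : ip 0 z = 0.
  by apply: (addrI (ip 0 z)); rewrite addr0 -{1}(mul1r (ip 0 z)) -ipZD scale1r addr0.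
by rewrite -[a *: x]addr0 ipZD ip0l addr0.
Qed.

Lemma ipDl x y z : ip (x + y) z = ip x z + ip y z.
Proof. by case: ip_inner => ipZD _ _ _; rewrite -{1}[x]scale1r ipZD mul1r. Qed.

Lemma ipZr a x z : ip z (a *: x) = a^* * ip z x.
Proof. by rewrite ipJ ipZl rmorphM /= -ipJ. Qed.

Lemma ipDr x y z : ip z (x + y) = ip z x + ip z y.
Proof. by rewrite ipJ ipDl rmorphD /= -!ipJ. Qed.

Lemma ip_combR (p q p' q' : R) x y u w :
  ip (p%:C *: x + q%:C *: y) (p'%:C *: u + q'%:C *: w) =
  (p * p')%:C * ip x u + (p * q')%:C * ip x w +
  (q * p')%:C * ip y u + (q * q')%:C * ip y w.
Proof.
have conj_real (r : R) : Num.conj r%:C = r%:C by exact: conjc_real.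
rewrite ipDl !ipDr !ipZl !ipZr !conj_real !rmorphM /=.
by rewrite !mulrA addrA.
Qed.

Section OrthonormalPair.
Variables (G : nat -> H) (k m : nat).
Hypotheses (G_orth : ip_orthonormal ip G) (neq_km : k != m).

Lemma ip_pair (p q p' q' : R) :
  ip (p%:C *: G k + q%:C *: G m) (p'%:C *: G k + q'%:C *: G m) = (p * p' + q * q')%:C.
Proof.
rewrite ip_combR !G_orth !eqxx (negbTE neq_km) eq_sym (negbTE neq_km).
by rewrite !mulr0 !mulr1 !addr0 rmorphD.
Qed.

Lemma ip_pair_out (p q : R) j : j != k -> j != m ->
  ip (p%:C *: G k + q%:C *: G m) (G j) = 0.
Proof.
move=> neq_jk neq_jm.
by rewrite ipDl !ipZl !G_orth eq_sym (negbTE neq_jk) eq_sym (negbTE neq_jm) !mulr0 addr0.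
Qed.

Lemma givens_orthonormal c s : c ^+ 2 + s ^+ 2 = 1 -> ip_orthonormal ip (givens G k m c s).
Proof.
move=> cs1 i j.
have out_pair p q l : l != k -> l != m -> ip (G l) (p%:C *: G k + q%:C *: G m) = 0.
  by move=> neq_lk neq_lm; rewrite ipDr !ipZr !G_orth (negbTE neq_lk) (negbTE neq_lm) !mulr0 addr0.
have [->|neq_ik] := eqVneq i k.
  rewrite givens_k; have [->|neq_jk] := eqVneq j k.
    by rewrite givens_k ip_pair -!expr2 cs1.
  have [->|neq_jm] := eqVneq j m.
    by rewrite givens_m // ip_pair mulrN mulrC addNr.
  by rewrite givens_out // ip_pair_out.
have [->|neq_im] := eqVneq i m.
  rewrite givens_m //; have [->|neq_jk] := eqVneq j k.
    by rewrite givens_k ip_pair mulNr mulrC addNr eq_sym (negbTE neq_km).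
  have [->|neq_jm] := eqVneq j m.
    by rewrite givens_m // ip_pair mulrNN -!expr2 addrC cs1.
  by rewrite givens_out // ip_pair_out.
rewrite givens_out //; have [->|neq_jk] := eqVneq j k.
  by rewrite givens_k out_pair // (negbTE neq_ik).
have [->|neq_jm] := eqVneq j m.
  by rewrite givens_m // out_pair // (negbTE neq_im).
by rewrite givens_out // G_orth.
Qed.

End OrthonormalPair.
End InnerProduct.

Section SymmetricOperator.
Variables (R : realType) (H : lmodType R[i]) (ip : H -> H -> R[i]).
Variables (D : H -> Prop) (E : H -> H).
Hypotheses (ip_inner : is_inner_product ip) (E_sym : densely_defined_symmetric ip D E).

Definition qform (x : H) : R := complex.Re (ip (E x) x).

Lemma dom_comb (p q : R[i]) x y : D x -> D y -> D (p *: x + q *: y).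
Proof.
case: E_sym => [[D0 DZD] _ _ _] Dx Dy.
by apply: (DZD) => //; rewrite -[_ *: y]addr0; apply: DZD.
Qed.

Lemma E_comb (p q : R[i]) x y : D x -> D y -> E (p *: x + q *: y) = p *: E x + q *: E y.
Proof.
case: E_sym => [[D0 DZD] _ EZD _] Dx Dy.
have E0 : E 0 = 0.
  by apply: (addrI (E 0)); rewrite addr0 -{1}[E 0]scale1r -EZD // scale1r addr0.
have DZ a z : D z -> D (a *: z) by move=> Dz; rewrite -[a *: z]addr0; apply: DZD.
have EZ a z : D z -> E (a *: z) = a *: E z.
  by move=> Dz; rewrite -[a *: z]addr0 EZD // E0 addr0.
by rewrite (EZD p x (q *: y) Dx (DZ q y Dy)) EZ.
Qed.

Lemma ip_qform x : D x -> ip (E x) x = (qform x)%:C.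
Proof.
case: E_sym => [_ _ _ E_symm] Dx.
have : ip (E x) x = (ip (E x) x)^* by rewrite -ipJ // E_symm.
rewrite /qform; case: (ip (E x) x) => a b [] b_opp.
by rewrite (_ : b = 0) //; lra.
Qed.

Lemma qform_comb (p q : R) x y : D x -> D y ->
  qform (p%:C *: x + q%:C *: y) =
  p ^+ 2 * qform x + 2 * p * q * complex.Re (ip (E x) y) + q ^+ 2 * qform y.
Proof.
case: E_sym => [_ _ _ E_symm] Dx Dy.
rewrite {1}/qform E_comb // ip_combR // (ip_qform Dx) (ip_qform Dy).
rewrite (E_symm y x) // (ipJ ip_inner (E x) y); case: (ip (E x) y) => u v.
by rewrite /=; ring.
Qed.

Section Givens.
Variables (G : nat -> H) (k m : nat).
Hypotheses (G_dom : forall i, D (G i)) (neq_km : k != m).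

Lemma givens_dom c s i : D (givens G k m c s i).
Proof. by rewrite /givens; case: ifP => _; [|case: ifP => _]; try apply: dom_comb. Qed.

Lemma qform_givens_sum c s : c ^+ 2 + s ^+ 2 = 1 ->
  qform (givens G k m c s k) + qform (givens G k m c s m) = qform (G k) + qform (G m).
Proof.
move=> cs1; rewrite givens_k givens_m // !qform_comb //.
transitivity ((c ^+ 2 + s ^+ 2) * (qform (G k) + qform (G m))); first ring.
by rewrite cs1 mul1r.
Qed.

Lemma givens_qform_attains t : qform (G k) < t <= qform (G m) ->
  exists c s, c ^+ 2 + s ^+ 2 = 1 /\ qform (givens G k m c s k) = t.
Proof.
move=> /(@unit_circle_form_attains _ _ _ (complex.Re (ip (E (G k)) (G m)))) [c [s [cs1 val]]].
by exists c, s; split; rewrite // givens_k qform_comb.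
Qed.

End Givens.
End SymmetricOperator.

Section Construction.
Variables (R : realType) (H : lmodType R[i]) (ip : H -> H -> R[i]).
Variables (D : H -> Prop) (E : H -> H) (d : nat -> R) (f : nat -> H).
Hypotheses (ip_inner : is_inner_product ip) (E_sym : densely_defined_symmetric ip D E).
Hypothesis d_nd : {homo d : i j / (i <= j)%N >-> i <= j}.
Hypotheses (f_dom : forall i, D (f i)) (f_orth : ip_orthonormal ip f).
Hypothesis f_defect_ge0 : forall n, 0 <= defect d (qform ip E \o f) n.
Hypothesis f_defect_zeros :
  forall N, exists2 z, (N <= z)%N & defect d (qform ip E \o f) z = 0.

Local Notation q := (qform ip E).

(* [stage_zeros] is what allows [f] to be recovered from the limit. *)
Record stage (k : nat) (G : nat -> H) : Prop := Stage {
  stage_dom : forall i, D (G i);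
  stage_orth : ip_orthonormal ip G;
  stage_defect_ge0 : forall n, 0 <= defect d (q \o G) n;
  stage_span : forall i, in_span f (G i);
  stage_diag : forall i, (i < k)%N -> q (G i) = d i;
  stage_zeros : forall z, defect d (q \o f) z = 0 ->
    defect d (q \o G) z = 0 /\ forall i, (i < z)%N -> in_span_lt G z (f i) }.

Lemma stage0 : stage 0 f.
Proof.
split=> // [i|z fz0]; first by exists i.+1; apply: span_lt_gen.
by split=> // i; apply: span_lt_gen.
Qed.

Lemma stage_defect0 k G : stage k G -> defect d (q \o G) k = 0.
Proof. by case=> _ _ _ _ G_diag _; apply: big1 => i _; rewrite /= G_diag ?subrr. Qed.

(* Rotate in the plane of [G k] and of the first later [G m] with [q (G m) >= d k]. *)
Lemma stage_step_lt k G : stage k G -> q (G k) < d k ->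
  exists2 G', stage k.+1 G' & forall i, (i < k)%N -> G' i = G i.
Proof.
move=> st lt_k; have Gk0 := stage_defect0 st.
case: st => G_dom G_orth G_ge0 G_span G_diag G_zeros.
have [z lt_kz Gz0] : exists2 z, (k < z)%N & defect d (q \o G) z = 0.
  by have [z lt_kz /G_zeros []] := f_defect_zeros k.+1; exists z.
have [m [lt_km dk_le below beyond]] := defect_partner d_nd lt_kz Gk0 Gz0 lt_k.
have neq_km : k != m by rewrite ltn_eqF.
have /(givens_qform_attains ip_inner E_sym G_dom) [c [s [cs1 G'k]]] :
  q (G k) < d k <= q (G m) by apply/andP.
set G' := givens G k m c s.
have G'_out i : i != k -> i != m -> G' i = G i by exact: givens_out.
have q_out i : i != k -> i != m -> (q \o G') i = (q \o G) i by move=> *; rewrite /= G'_out.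
have q_sum := qform_givens_sum ip_inner E_sym G_dom neq_km cs1.
have G'_keep n : (n <= k)%N || (m < n)%N -> defect d (q \o G') n = defect d (q \o G) n.
  exact: (@defect_transfer_out _ d (q \o G) (q \o G') k m lt_km q_out q_sum).
have G'_below i : (i < k)%N -> G' i = G i.
  by move=> lt_ik; rewrite G'_out // ltn_eqF // (ltn_trans lt_ik lt_km).
exists G' => //; split.
- exact: (givens_dom E_sym k m G_dom c s).
- exact: (givens_orthonormal ip_inner G_orth neq_km cs1).
- exact: (defect_transfer_ge0 lt_km q_out q_sum d_nd G_ge0 Gk0 G'k below).
- by move=> i; apply: in_span_trans G_span (givens_in_span G k m c s i).
- move=> i; rewrite ltnS leq_eqVlt; case/predU1P => [->|lt_ik]; first exact: G'k.
  by rewrite G'_below ?G_diag.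
move=> y /G_zeros [Gy0 f_span]; have [le_yk|lt_ky] := leqP y k.
  split=> [|i /f_span]; first by rewrite G'_keep ?le_yk.
  apply: span_lt_trans => j lt_jy; rewrite -G'_below; first exact: span_lt_gen.
  exact: leq_trans lt_jy le_yk.
have lt_my := beyond y lt_ky Gy0.
split=> [|i /f_span]; first by rewrite G'_keep ?lt_my ?orbT.
by apply: span_lt_trans => j; apply: span_lt_givens.
Qed.

Lemma stage_step k G : stage k G ->
  exists2 G', stage k.+1 G' & forall i, (i < k)%N -> G' i = G i.
Proof.
move=> st; have := stage_defect_ge0 st k.+1.
rewrite defectS (stage_defect0 st) add0r subr_ge0 le_eqVlt.
case/orP => [/eqP dk | /(stage_step_lt st) //].
exists G => //; case: st => G_dom G_orth G_ge0 G_span G_diag G_zeros.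
by split=> // i; rewrite ltnS leq_eqVlt; case/predU1P => [->|/G_diag].
Qed.

Lemma stage_limit : exists e : nat -> H,
  [/\ forall i, D (e i), ip_orthonormal ip e, forall i, in_span f (e i),
      forall i, in_span e (f i) & forall i, q (e i) = d i].
Proof.
have [Gs hGs] := @dependent_choice _ stage
  (fun k G G' => forall i, (i < k)%N -> G' i = G i) f stage0 stage_step.
have frozen k i : (i < k)%N -> Gs k i = Gs i.+1 i.
  elim: k => [//|k IH]; rewrite ltnS leq_eqVlt => /predU1P [->//|lt_ik].
  by rewrite (hGs k).2 // IH.
exists (fun i => Gs i.+1 i); split=> [i|i j|i|i|i].
- exact: stage_dom (hGs i.+1).1 i.
- set M := (maxn i j).+1.
  rewrite -(frozen M i) ?ltnS ?leq_maxl // -(frozen M j) ?ltnS ?leq_maxr //.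
  exact: (stage_orth (hGs M).1).
- exact: stage_span (hGs i.+1).1 i.
- have [z lt_iz fz0] := f_defect_zeros i.+1; exists z.
  have [_ f_span] := stage_zeros (hGs z).1 fz0.
  apply: (span_lt_trans (h := fun j => Gs j.+1 j) _ (f_span i lt_iz)) => j lt_jz.
  by rewrite frozen //; apply: span_lt_gen.
- exact: stage_diag (hGs i.+1).1 i (ltnSn i).
Qed.

End Construction.

Theorem lemma2p5 (R : realType) (H : lmodType R[i]) (ip : H -> H -> R[i])
  (D : H -> Prop) (E : H -> H) (d lam : nat -> R) (f : nat -> H) :
  is_hilbert ip ->
  densely_defined_symmetric ip D E ->
  (forall i, d i <= d i.+1) ->
  (forall i, lam i <= lam i.+1) ->
  (forall k, 0 <= \sum_(i < k.+1) (d i - lam i)) ->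
  (forall N, exists2 k, (N <= k)%N & \sum_(i < k.+1) (d i - lam i) = 0) ->
  (forall i, D (f i)) ->
  ip_orthonormal ip f ->
  (forall i, ip (E (f i)) (f i) = (lam i)%:C) ->
  exists e : nat -> H,
    [/\ ip_orthonormal ip e,
        (forall i, in_span f (e i)),
        (forall v, in_closed_span ip e v <-> in_closed_span ip f v) &
        (forall i, ip (E (e i)) (e i) = (d i)%:C)].
Proof.
move=> [ip_inner _] E_sym d_step _ lam_ge0 lam_zeros f_dom f_orth f_diag.
have defect_f n : defect d (qform ip E \o f) n = \sum_(i < n) (d i - lam i).
  by apply: eq_bigr => i _; rewrite /= /qform f_diag.
have d_nd := homo_leq (@lexx _ _) (@le_trans _ _) d_step.
have f_ge0 n : 0 <= defect d (qform ip E \o f) n by case: n => [|n]; rewrite defect_f ?big_ord0.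
have f_zeros N : exists2 z, (N <= z)%N & defect d (qform ip E \o f) z = 0.
  by have [k le_Nk k0] := lam_zeros N; exists k.+1; rewrite ?defect_f ?leqW.
have [e [e_dom e_orth e_span f_span e_diag]] :=
  stage_limit ip_inner E_sym d_nd f_dom f_orth f_ge0 f_zeros.
exists e; split=> // [v|i]; first by split; apply: in_closed_span_mono.
by rewrite (ip_qform ip_inner E_sym (e_dom i)) e_diag.
Qed.
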